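(* Let $\pi_0:Z_0\to Z$ be the minimal resolution of a canonical surface singularity, with exceptional curves $E_1,\dots,E_r$ generating $\mathbf{E}_0\subseteq\operatorname{Pic}Z_0$ and numerical cycle $Z_{\mathrm{num}}$. Let $g:\mathbf{E}_0\to\mathbb{Q}$ be of the form $g(E)=-E^2+\ell(E)$ with $\ell$ linear and $\ell(E_i)\le0$ for all $i$. Then $g(E)>0$ for all nonzero effective $E\in\mathbf{E}_0$ if and only if $g(Z_{\mathrm{num}})>0$.
   Context: The numerical cycle $Z_{\mathrm{num}}$ is the minimal nonzero effective $\pi_0$-exceptional divisor $F$ with $F\cdot E_i\le0$ for all $i$. *)

From HB Require Import structures.
From mathcomp Require Import all_boot all_order all_algebra.
Set Implicit Arguments. Unset Strict Implicit. Unset Printing Implicit Defensive.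
Import Order.TTheory GRing.Theory Num.Theory.
Local Open Scope ring_scope.

(* The lattice E_0 generated by the exceptional curves E_1..E_r is modelled by
   coefficient vectors 'I_r -> int (E = \sum_i a_i E_i); M i j = E_i . E_j is the
   intersection matrix. *)

Definition iform (r : nat) (M : 'M[int]_r) (a b : 'I_r -> int) : int :=
  \sum_(i < r) \sum_(j < r) a i * M i j * b j.

Definition ecurve (r : nat) (i : 'I_r) : 'I_r -> int := fun j => (i == j)%:R.

Definition effective (r : nat) (a : 'I_r -> int) : Prop := forall i, 0 <= a i.
Definition nonzero (r : nat) (a : 'I_r -> int) : Prop := exists i, a i != 0.

(* Intersection lattice of the minimal resolution of a canonical surface
   singularity: a connected configuration of (-2)-curves meeting
   non-negatively, with negative definite intersection form. *)
Definition canonical_config (r : nat) (M : 'M[int]_r) : Prop :=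
  (0 < r)%N /\
  (forall i j, M i j = M j i) /\
  (forall i, M i i = -2) /\
  (forall i j, i != j -> 0 <= M i j) /\
  (forall a : 'I_r -> int, nonzero a -> iform M a a < 0) /\
  (forall i j, connect (fun x y : 'I_r => M x y != 0) i j).

Definition antinef (r : nat) (M : 'M[int]_r) (F : 'I_r -> int) : Prop :=
  forall i, iform M F (ecurve i) <= 0.

Definition numerical_cycle (r : nat) (M : 'M[int]_r) (Z : 'I_r -> int) : Prop :=
  [/\ effective Z, nonzero Z, antinef M Z
    & forall F : 'I_r -> int, effective F -> nonzero F -> antinef M F ->
        (forall i, F i <= Z i) -> forall i, F i = Z i].

Definition gfun (r : nat) (M : 'M[int]_r) (lv : 'I_r -> rat) (E : 'I_r -> int) : rat :=
  - (iform M E E)%:~R + \sum_(i < r) (E i)%:~R * lv i.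

From HB Require Import structures.
From mathcomp Require Import all_boot all_order all_algebra.
From mathcomp Require Import zify lra.
Import Order.TTheory GRing.Theory Num.Theory.
Set Implicit Arguments. Unset Strict Implicit. Unset Printing Implicit Defensive.
Local Open Scope ring_scope.

(* Laufer's algorithm: starting from a nonzero effective D <= Z_num, add a curve
   E_j with D.E_j > 0 as long as there is one.  Since (D + E_j)^2 =
   D^2 + 2 D.E_j - 2, the self-intersection never decreases, and the process
   stops at an antinef cycle below Z_num, which is Z_num by minimality.  Hence
   D^2 <= Z_num^2, and as l(E_i) <= 0 also l(D) >= l(Z_num): g(D) >= g(Z_num).
   A general effective E splits as D + R with D = min(E, Z_num), which is
   nonzero since Z_num has full support on a connected configuration, and
   D.R <= 0, so g(E) >= g(D) + g(R); induction on the size of E concludes. *)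

Section IntersectionForm.
Variables (r : nat) (M : 'M[int]_r).
Implicit Types (a b c D Z : 'I_r -> int).

Lemma iform_ecurve a j : iform M a (ecurve j) = \sum_i a i * M i j.
Proof.
rewrite /iform; apply: eq_bigr => i _.
rewrite (bigD1 j) //= big1 => [|k nkj]; first by rewrite /ecurve eqxx mulr1 addr0.
by rewrite /ecurve eq_sym (negbTE nkj) mulr0.
Qed.

Lemma iform_ecurve2 i j : iform M (ecurve i) (ecurve j) = M i j.
Proof.
rewrite iform_ecurve (bigD1 i) //= big1 => [|k nki].
  by rewrite /ecurve eqxx mul1r addr0.
by rewrite /ecurve eq_sym (negbTE nki) mul0r.
Qed.

Lemma sum_ecurve (j : 'I_r) : \sum_k ecurve j k = 1.
Proof.
rewrite (bigD1 j) //= big1 => [|k nkj]; first by rewrite /ecurve eqxx addr0.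
by rewrite /ecurve eq_sym (negbTE nkj).
Qed.

Lemma iform_sum_ecurve a b : iform M a b = \sum_j iform M a (ecurve j) * b j.
Proof.
rewrite [LHS]exchange_big; apply: eq_bigr => j _.
by rewrite iform_ecurve mulr_suml.
Qed.

Lemma eq_iform a a' b b' : a =1 a' -> b =1 b' -> iform M a b = iform M a' b'.
Proof.
by move=> eqa eqb; apply: eq_bigr => i _; apply: eq_bigr => j _; rewrite eqa eqb.
Qed.

Lemma iformDl a b c : iform M (a \+ b) c = iform M a c + iform M b c.
Proof.
rewrite !(iform_sum_ecurve _ c) -big_split; apply: eq_bigr => j _ /=.
rewrite !iform_ecurve -mulrDl -big_split; congr (_ * _).
by apply: eq_bigr => i _; rewrite mulrDl.
Qed.

Hypothesis M_sym : forall i j, M i j = M j i.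

Lemma iformC a b : iform M a b = iform M b a.
Proof.
rewrite /iform exchange_big; apply: eq_bigr => i _; apply: eq_bigr => j _.
by rewrite M_sym mulrC mulrA mulrAC.
Qed.

Lemma iform_sqrD a b :
  iform M (a \+ b) (a \+ b) = iform M a a + iform M a b *+ 2 + iform M b b.
Proof.
rewrite iformDl ![iform M _ (a \+ b)]iformC !iformDl (iformC b a).
by rewrite mulr2n !addrA.
Qed.

Lemma eq_gfun (lv : 'I_r -> rat) a b : a =1 b -> gfun M lv a = gfun M lv b.
Proof.
by move=> eqab; rewrite /gfun (eq_iform eqab eqab); under eq_bigr do rewrite eqab.
Qed.

Lemma gfunD (lv : 'I_r -> rat) a b :
  gfun M lv (a \+ b) = gfun M lv a + gfun M lv b - (iform M a b *+ 2)%:~R.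
Proof.
rewrite /gfun iform_sqrD !intrD; under eq_bigr do rewrite /= intrD mulrDl.
rewrite big_split /=; lra.
Qed.

Hypothesis M_offdiag_ge0 : forall i j, i != j -> 0 <= M i j.

Lemma iform_ecurve_ge_term a i k : effective a -> a i = 0 ->
  a k * M k i <= iform M a (ecurve i).
Proof.
move=> a_ge0 ai0; rewrite iform_ecurve (bigD1 k) //= lerDl sumr_ge0 // => l _.
have [->|nli] := eqVneq l i; first by rewrite ai0 mul0r.
by rewrite mulr_ge0 ?M_offdiag_ge0.
Qed.

Lemma iform_ecurve_ge0 a i : effective a -> a i = 0 -> 0 <= iform M a (ecurve i).
Proof.
move=> a_ge0 ai0; apply: le_trans (iform_ecurve_ge_term i a_ge0 ai0).
by rewrite ai0 mul0r.
Qed.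

(* Z = D + (Z - D), and Z - D is effective and vanishes at i. *)
Lemma antinef_sub_ecurve_le0 Z D i :
  antinef M Z -> (forall k, D k <= Z k) -> D i = Z i -> iform M D (ecurve i) <= 0.
Proof.
move=> Z_antinef D_le Di.
have ZDE : Z =1 D \+ (fun k => Z k - D k) by move=> k /=; rewrite addrC subrK.
have := Z_antinef i; rewrite (eq_iform ZDE (frefl _)) iformDl.
have : 0 <= iform M (fun k => Z k - D k) (ecurve i).
  by apply: iform_ecurve_ge0 => [k|]; rewrite ?subr_ge0 ?Di ?subrr.
lra.
Qed.

End IntersectionForm.

Section NumericalCycle.
Variables (r : nat) (M : 'M[int]_r) (lv : 'I_r -> rat) (Z : 'I_r -> int).
Implicit Types (D E : 'I_r -> int).
Hypotheses (M_sym : forall i j, M i j = M j i) (M_diag : forall i, M i i = -2).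
Hypothesis M_offdiag_ge0 : forall i j, i != j -> 0 <= M i j.
Hypothesis M_connected : forall i j, connect (fun x y => M x y != 0) i j.
Hypotheses (Z_ge0 : effective Z) (Z_nz : nonzero Z) (Z_antinef : antinef M Z).
Hypothesis Z_minimal : forall F, effective F -> nonzero F -> antinef M F ->
  (forall i, F i <= Z i) -> F =1 Z.

Lemma antinef_or_ecurve_gt0 D : (forall i, D i <= Z i) ->
  antinef M D \/ exists2 j, D j < Z j & 0 < iform M D (ecurve j).
Proof.
move=> D_le.
have [/forallP D_antinef|/forallPn[j]] := boolP [forall i, iform M D (ecurve i) <= 0].
  by left.
rewrite -ltNge => DEj_gt0; right; exists j => //; rewrite lt_neqAle D_le andbT.
apply: contraTneq DEj_gt0 => Dj; rewrite -leNgt.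
exact: antinef_sub_ecurve_le0.
Qed.

Lemma iform_sqr_le_numerical_cycle D : effective D -> nonzero D ->
  (forall i, D i <= Z i) -> iform M D D <= iform M Z Z.
Proof.
have [n] := ubnP (absz (\sum_i (Z i - D i))).
elim: n D => // n IH D gap_lt D_ge0 D_nz D_le.
have [D_antinef|[j Dj_lt DEj_gt0]] := antinef_or_ecurve_gt0 D_le.
  by have D_Z := Z_minimal D_ge0 D_nz D_antinef D_le; rewrite (eq_iform M D_Z D_Z).
set D' := D \+ ecurve j.
have D'_ge0 : effective D'.
  by move=> k; rewrite /D' /= /ecurve; have := D_ge0 k; case: eqP; lia.
have D'_nz : nonzero D' by exists j; rewrite /D' /= /ecurve eqxx; have := D_ge0 j; lia.
have D'_le k : D' k <= Z k.
  by rewrite /D' /= /ecurve; have := D_le k; case: eqP => [<-|_]; lia.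
have gap_D' : \sum_i (Z i - D' i) = \sum_i (Z i - D i) - 1.
  by rewrite -(sum_ecurve j) -sumrB; apply: eq_bigr => i _; rewrite opprD addrA.
have gap_D'_ge0 : 0 <= \sum_i (Z i - D' i) by apply: sumr_ge0 => i _; rewrite subr_ge0.
have gap_D'_lt : (absz (\sum_i (Z i - D' i))%R < n)%N by lia.
have := IH D' gap_D'_lt D'_ge0 D'_nz D'_le.
rewrite (iform_sqrD M_sym) iform_ecurve2 M_diag mulr2n; lia.
Qed.

Lemma numerical_cycle_gt0 i : 0 < Z i.
Proof.
have [k Zk_neq0] := Z_nz; have Zk_gt0 : 0 < Z k by rewrite lt0r Zk_neq0 Z_ge0.
have Z_gt0_adj x y : M x y != 0 -> 0 < Z x -> 0 < Z y.
  move=> Mxy Zx_gt0; rewrite lt0r Z_ge0 andbT.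
  apply: contraTneq (Z_antinef y) => Zy0; rewrite -ltNge.
  have nxy : x != y by apply: contraTneq Zx_gt0 => ->; rewrite Zy0 ltxx.
  apply: lt_le_trans (iform_ecurve_ge_term M_offdiag_ge0 x Z_ge0 Zy0).
  by rewrite mulr_gt0 // lt0r Mxy M_offdiag_ge0.
have /connectP[p p_path ->] := M_connected k i.
elim: p k Zk_gt0 p_path {Zk_neq0} => //= y p IHp k Zk_gt0 /andP[Mky].
exact/IHp/(Z_gt0_adj _ _ Mky).
Qed.

Hypothesis lv_le0 : forall i, lv i <= 0.

Lemma gfun_numerical_cycle_le D : effective D -> nonzero D ->
  (forall i, D i <= Z i) -> gfun M lv Z <= gfun M lv D.
Proof.
move=> D_ge0 D_nz D_le; rewrite /gfun lerD // ?lerN2 ?ler_int.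
  exact: iform_sqr_le_numerical_cycle.
by apply: ler_sum => i _; rewrite ler_wnM2r // ler_int.
Qed.

(* D.R <= 0 because R is supported where D = Z, and there D.E_i <= 0. *)
Lemma gfun_gt0 : 0 < gfun M lv Z ->
  forall E, effective E -> nonzero E -> 0 < gfun M lv E.
Proof.
move=> gZ_gt0 E; have [n] := ubnP (absz (\sum_i E i)).
elim: n E => // n IH E size_lt E_ge0 [i0 Ei0_neq0].
pose D i := Order.min (E i) (Z i); pose R i := E i - D i.
have E_DR : E =1 D \+ R by move=> i /=; rewrite addrC subrK.
have D_ge0 : effective D by move=> i; rewrite le_min E_ge0 Z_ge0.
have D_le i : D i <= Z i by rewrite ge_min lexx orbT.
have Di0_gt0 : 0 < D i0.
  by rewrite lt_min numerical_cycle_gt0 andbT lt0r Ei0_neq0 E_ge0.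
have D_nz : nonzero D by exists i0; rewrite gt_eqF.
have gD_gt0 : 0 < gfun M lv D.
  exact: lt_le_trans gZ_gt0 (gfun_numerical_cycle_le D_ge0 D_nz D_le).
have [/existsP R_nz|/existsPn R0] := boolP [exists i, R i != 0]; last first.
  have E_D : E =1 D by move=> i; rewrite E_DR /= (eqP (negPn (R0 i))) addr0.
  by rewrite (eq_gfun M lv E_D).
have R_ge0 : effective R by move=> i; rewrite subr_ge0 ge_min lexx.
have size_R_lt : (absz (\sum_i R i)%R < n)%N.
  have sumE : \sum_i E i = \sum_i D i + \sum_i R i.
    by rewrite -big_split; apply: eq_bigr => i _; rewrite E_DR.
  have sumD_gt0 : 0 < \sum_i D i.
    by rewrite (bigD1 i0) //= ltr_wpDr ?sumr_ge0.
  have sumR_ge0 : 0 <= \sum_i R i by rewrite sumr_ge0.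
  lia.
have DR_le0 : iform M D R <= 0.
  rewrite iform_sum_ecurve sumr_le0 // => i _.
  have [EZ|ZE] := leP (E i) (Z i); first by rewrite /R /D min_l // subrr mulr0.
  have DEi_le0 := antinef_sub_ecurve_le0 M_offdiag_ge0 Z_antinef D_le (min_r (ltW ZE)).
  by rewrite mulr_le0_ge0.
have gR_gt0 := IH R size_R_lt R_ge0 R_nz.
rewrite (eq_gfun M lv E_DR) (gfunD M_sym).
have : (iform M D R)%:~R <= 0 :> rat by rewrite lerz0.
lra.
Qed.

End NumericalCycle.

Theorem mainTheorem12 (r : nat) (M : 'M[int]_r) (lv : 'I_r -> rat)
    (Znum : 'I_r -> int) :
  canonical_config M ->
  (forall i, lv i <= 0) ->
  numerical_cycle M Znum ->
  ((forall E : 'I_r -> int, effective E -> nonzero E -> 0 < gfun M lv E)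
   <-> 0 < gfun M lv Znum).
Proof.
move=> [_ [M_sym [M_diag [M_offdiag_ge0 [_ M_connected]]]]] lv_le0.
move=> [Z_ge0 Z_nz Z_antinef Z_minimal].
split=> [g_gt0|gZ_gt0]; first exact: g_gt0 Znum Z_ge0 Z_nz.
exact: (gfun_gt0 M_sym M_diag M_offdiag_ge0 M_connected Z_ge0 Z_nz Z_antinef
  Z_minimal lv_le0 gZ_gt0).
Qed.
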